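(* Let $(C,D)$ define an irreducible MSPP with $C=-\mathrm{diag}(c_1,\dots,c_p)$, $c_i>0$. Let $\kappa=\frac{\min_i c_i+\max_i c_i}{2}$ and $\gamma=\sqrt{(\min_i c_i)(\max_i c_i)}$. Then the squared coefficient of variation of the event-stationary inter-event time satisfies $$1\le c^2\le 2\frac{\kappa^2}{\gamma^2}-1 .$$
   Context: A Markovian arrival process (MAP) of order $p$ is specified by $p\times p$ real matrices $C$ and $D$ such that $D$ has nonnegative entries, $C$ has nonnegative off-diagonal entries, and $Q=C+D$ is the generator (row sums zero) of an irreducible continuous-time Markov chain on $\{1,\dots,p\}$; $C$ is assumed nonsingular. An MSPP is a MAP with $C$ diagonal. $\mathbf{1}$ is the all-ones column vector; $\boldsymbol{\pi}$ is the stationary distribution of $Q$; $\boldsymbol{\alpha}$ is the stationary distribution of $P=(-C)^{-1}D$. The event-stationary inter-event time $T_1^{\alpha}$ has $\mathbb{P}(T_1^{\alpha}>t)=\boldsymbol{\alpha}e^{Ct}\mathbf{1}$, and $c^2=\mathrm{Var}(T_1^{\alpha})/\mathbb{E}^2[T_1^{\alpha}]$, which satisfies $c^2+1=2\,\boldsymbol{\pi}C\mathbf{1}\,\boldsymbol{\pi}C^{-1}\mathbf{1}$. *)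

From HB Require Import structures.
From mathcomp Require Import all_boot all_order all_algebra.
Set Implicit Arguments. Unset Strict Implicit. Unset Printing Implicit Defensive.
Import Order.TTheory GRing.Theory Num.Theory.
Local Open Scope ring_scope.

Section MAPDefs.
Variable R : rcfType.
Variable n : nat.

Definition ones : 'cV[R]_n := const_mx 1.

Definition is_generator (Q : 'M[R]_n) : Prop :=
  (forall i j : 'I_n, i != j -> 0 <= Q i j) /\ Q *m ones = 0.

Definition irreducible_gen (Q : 'M[R]_n) : Prop :=
  forall i j : 'I_n, connect (fun k l : 'I_n => (k != l) && (0 < Q k l)) i j.

Definition is_MAP (C D : 'M[R]_n) : Prop :=
  (forall i j : 'I_n, 0 <= D i j) /\
  (forall i j : 'I_n, i != j -> 0 <= C i j) /\
  is_generator (C + D) /\ irreducible_gen (C + D) /\ C \in unitmx.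

Definition is_MSPP (C D : 'M[R]_n) : Prop :=
  is_MAP C D /\ is_diag_mx C.

Definition is_stationary_dist (P : 'M[R]_n) (v : 'rV[R]_n) : Prop :=
  v *m P = v /\ (forall i, 0 <= v 0 i) /\ \sum_i v 0 i = 1.

Definition embedded (C D : 'M[R]_n) : 'M[R]_n := invmx (- C) *m D.

(* moments of the phase-type inter-event time T with P(T>t) = alpha e^{Ct} 1:
   E[T] = alpha (-C)^{-1} 1,  E[T^2] = 2 alpha (-C)^{-2} 1 *)
Definition ET1 (alpha : 'rV[R]_n) (C : 'M[R]_n) : R :=
  (alpha *m invmx (- C) *m ones) 0 0.
Definition ET2 (alpha : 'rV[R]_n) (C : 'M[R]_n) : R :=
  2 * (alpha *m invmx (- C) *m invmx (- C) *m ones) 0 0.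

Definition scv (alpha : 'rV[R]_n) (C : 'M[R]_n) : R :=
  (ET2 alpha C - (ET1 alpha C) ^+ 2) / (ET1 alpha C) ^+ 2.

End MAPDefs.

(** The inter-event time of an MSPP is hyperexponential: it starts in phase
    [i] with probability [alpha_i] and then waits an exponential time of rate
    [c_i], so with [x_i = 1 / c_i] its moments are [E T = sum_i alpha_i x_i]
    and [E T^2 = 2 sum_i alpha_i x_i^2].  Hence only the fact that [alpha] is
    a probability vector matters, not [D] or stationarity.  The bound
    [c^2 >= 1] is the variance inequality [(E x)^2 <= E x^2].  The upper bound
    is Kantorovich's inequality: every [x_i] lies in [[a, b]] with
    [a = 1 / cmax], [b = 1 / cmin], so averaging [(x - a)(x - b) <= 0] gives
    [E x^2 <= (a + b) E x - a b], and the ratio of the right-hand side to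
    [(E x)^2] is at most [(a + b)^2 / (4 a b)] since
    [((a + b) E x - 2 a b)^2 >= 0]. *)
From HB Require Import structures.
From mathcomp Require Import all_boot all_order all_algebra.
From mathcomp Require Import ring lra.
Import Order.TTheory GRing.Theory Num.Theory.
Local Open Scope ring_scope.

Section WeightedMeans.
Variables (R : realFieldType) (I : finType) (w x : I -> R).
Hypotheses (w_ge0 : forall i, 0 <= w i) (w_sum1 : \sum_i w i = 1).

Lemma wmean_ge a : (forall i, a <= x i) -> a <= \sum_i w i * x i.
Proof.
move=> a_le; rewrite -[a]mul1r -w_sum1 mulr_suml.
by apply: ler_sum => i _; exact: ler_wpM2l.
Qed.

Lemma wmean_mulBB u v :
  \sum_i w i * ((x i - u) * (x i - v)) =
  \sum_i w i * x i ^+ 2 - (u + v) * \sum_i w i * x i + u * v.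
Proof.
rewrite (eq_bigr (fun i => w i * x i ^+ 2 - (u + v) * (w i * x i) + u * v * w i));
  last by move=> i _; ring.
by rewrite big_split sumrB -!mulr_sumr w_sum1 mulr1.
Qed.

Lemma sqr_wmean_le : (\sum_i w i * x i) ^+ 2 <= \sum_i w i * x i ^+ 2.
Proof.
set m := \sum_i w i * x i.
have : 0 <= \sum_i w i * ((x i - m) * (x i - m)).
  by apply: sumr_ge0 => i _; rewrite mulr_ge0 // -expr2 sqr_ge0.
by rewrite wmean_mulBB -/m; lra.
Qed.

Lemma wmean_sqr_le_bounds a b : (forall i, a <= x i <= b) ->
  \sum_i w i * x i ^+ 2 <= (a + b) * \sum_i w i * x i - a * b.
Proof.
move=> x_ab.
have : \sum_i w i * ((x i - a) * (x i - b)) <= 0.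
  apply: sumr_le0 => i _; have /andP[ax xb] := x_ab i.
  by rewrite mulr_ge0_le0 // mulr_ge0_le0 ?subr_ge0 ?subr_le0.
by rewrite wmean_mulBB; lra.
Qed.

End WeightedMeans.

Lemma kantorovich_ratio (R : realFieldType) (l u m s : R) :
  0 < l -> 0 < u -> 0 < m -> s <= (l^-1 + u^-1) * m - (l * u)^-1 ->
  2 * s / m ^+ 2 - 1 <= 2 * ((l + u) / 2) ^+ 2 / (l * u) - 1.
Proof.
move=> l_gt0 u_gt0 m_gt0 s_le; rewrite lerD2r.
have lu_gt0 : 0 < l * u by rewrite mulr_gt0.
rewrite ler_pdivrMr ?exprn_gt0 // mulrAC ler_pdivlMr //.
have s_lu : s * (l * u) <= (l + u) * m - 1.
  have -> : (l + u) * m - 1 = ((l^-1 + u^-1) * m - (l * u)^-1) * (l * u).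
    by field; rewrite !gt_eqF.
  by rewrite ler_pM2r.
rewrite (_ : _ * m ^+ 2 = ((l + u) * m) ^+ 2 / 2); last by field.
have := sqr_ge0 ((l + u) * m - 2); lra.
Qed.

Lemma invmx_diag (R : fieldType) n (c : 'rV[R]_n) :
  (forall i, c 0 i != 0) -> invmx (diag_mx c) = diag_mx (\row_j (c 0 j)^-1).
Proof.
move=> c_neq0.
have c_cV : diag_mx c *m diag_mx (\row_j (c 0 j)^-1) = 1%:M.
  apply/matrixP=> i j; rewrite mulmx_diag !mxE.
  by case: (i =P j) => [->|_]; rewrite ?mulfV ?mulr0n ?mulr1n.
have [c_unit _] := mulmx1_unit c_cV.
by rewrite -[invmx _]mulmx1 -c_cV mulmxA mulVmx // mul1mx.
Qed.

Section DiagonalMoments.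
Variables (R : rcfType) (n : nat) (c alpha : 'rV[R]_n).
Hypothesis c_neq0 : forall i, c 0 i != 0.

Let invmx_oppC : invmx (- - diag_mx c) = diag_mx (\row_j (c 0 j)^-1).
Proof. by rewrite opprK invmx_diag. Qed.

Lemma ET1_diag : ET1 alpha (- diag_mx c) = \sum_i alpha 0 i * (c 0 i)^-1.
Proof.
rewrite /ET1 invmx_oppC mul_mx_diag !mxE.
by apply: eq_bigr => i _; rewrite !mxE mulr1.
Qed.

Lemma ET2_diag :
  ET2 alpha (- diag_mx c) = 2 * \sum_i alpha 0 i * (c 0 i)^-1 ^+ 2.
Proof.
rewrite /ET2 invmx_oppC !mul_mx_diag !mxE; congr (_ * _).
by apply: eq_bigr => i _; rewrite !mxE mulr1 mulrA.
Qed.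

End DiagonalMoments.

Theorem proposition4 (R : rcfType) (p : nat)
    (c : 'rV[R]_p.+1) (D : 'M[R]_p.+1) (alpha : 'rV[R]_p.+1) :
  (forall i, 0 < c 0 i) ->
  is_MSPP (- diag_mx c) D ->
  is_stationary_dist (embedded (- diag_mx c) D) alpha ->
  let cmin := \big[Num.min/c 0 0]_(i < p.+1) c 0 i in
  let cmax := \big[Num.max/c 0 0]_(i < p.+1) c 0 i in
  let kappa := (cmin + cmax) / 2 in
  let gamma := Num.sqrt (cmin * cmax) in
  1 <= scv alpha (- diag_mx c) <= 2 * kappa ^+ 2 / gamma ^+ 2 - 1.
Proof.
move=> c_gt0 _ [_ [alpha_ge0 alpha_sum1]]; cbv zeta.
set cmin := \big[Num.min/c 0 0]_(i < p.+1) c 0 i.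
set cmax := \big[Num.max/c 0 0]_(i < p.+1) c 0 i.
have c_neq0 i : c 0 i != 0 by rewrite gt_eqF.
have cmin_gt0 : 0 < cmin by apply: lt_bigmin.
have cmax_gt0 : 0 < cmax := lt_le_trans (c_gt0 ord0) (le_bigmax _ _ ord0).
have x_bounds i : cmax^-1 <= (c 0 i)^-1 <= cmin^-1.
  by rewrite !lef_pV2 ?posrE // le_bigmax bigmin_le.
pose w i : R := alpha 0 i; pose x i : R := (c 0 i)^-1.
set mu := \sum_i alpha 0 i * (c 0 i)^-1.
set s := \sum_i alpha 0 i * (c 0 i)^-1 ^+ 2.
have mu_gt0 : 0 < mu.
  apply: lt_le_trans (wmean_ge _ _ w x alpha_ge0 alpha_sum1 cmax^-1 _).
    by rewrite invr_gt0.
  by move=> i; case/andP: (x_bounds i).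
have mu_le_s : mu ^+ 2 <= s := sqr_wmean_le _ _ w x alpha_ge0 alpha_sum1.
have s_le : s <= (cmax^-1 + cmin^-1) * mu - cmax^-1 * cmin^-1 :=
  wmean_sqr_le_bounds _ _ w x alpha_ge0 alpha_sum1 _ _ x_bounds.
rewrite /scv ET1_diag ?ET2_diag // -/mu -/s sqr_sqrtr; last by rewrite mulr_ge0 ?ltW.
rewrite (_ : _ / mu ^+ 2 = 2 * s / mu ^+ 2 - 1); last by field; rewrite gt_eqF.
apply/andP; split.
  by rewrite lerBrDr ler_pdivlMr ?exprn_gt0 //; lra.
by apply: kantorovich_ratio => //; rewrite invfM; lra.
Qed.
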